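(* Fix $d \geq 2$. If $c > (d+1)/2$ and $Y \sim Y_d(n, \frac{c\log n}{n})$, then with high probability $Y$ does not contain two isolated $(d-1)$-faces that share a common $(d-2)$-face.
   Context: $Y_d(n,p)$ is the random $d$-dimensional simplicial complex on $n$ vertices with complete $(d-1)$-skeleton in which each $d$-face is included independently with probability $p$. ''With high probability'' means with probability tending to $1$ as $n\to\infty$. A $(d-1)$-face is isolated if it is contained in no $d$-face of $Y$. *)

From HB Require Import structures.
From mathcomp Require Import all_boot all_order all_algebra.
From mathcomp Require Import all_classical all_reals all_analysis.
Set Implicit Arguments. Unset Strict Implicit. Unset Printing Implicit Defensive.
Import Order.TTheory GRing.Theory Num.Theory.
Local Open Scope ring_scope.

(* Vertices are 'I_n.  A k-face is a set of k+1 vertices.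
   Y_d(n,p) has complete (d-1)-skeleton, so it is determined by its set of
   d-faces Y, a subset of all (d+1)-element subsets of 'I_n. *)

Definition dfaces (n d : nat) : {set {set 'I_n}} :=
  [set s : {set 'I_n} | #|s| == d.+1].

Definition isolated (n d : nat) (Y : {set {set 'I_n}}) (s : {set 'I_n}) : bool :=
  (#|s| == d) && [forall t in Y, ~~ (s \subset t)].

Definition two_adjacent_isolated (n d : nat) (Y : {set {set 'I_n}}) : bool :=
  [exists s : {set 'I_n}, exists t : {set 'I_n}, exists r : {set 'I_n},
     [&& s != t, isolated d Y s, isolated d Y t, #|r| == d.-1,
         r \subset s & r \subset t]].

Definition Yprob {R : realType} (n d : nat) (p : R)
    (E : {set {set 'I_n}} -> bool) : R :=
  \sum_(Y in powerset (dfaces n d) | E Y)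
     p ^+ #|Y| * (1 - p) ^+ (#|dfaces n d| - #|Y|).

(* Union bound over the triples (r, a, b) with #|r| = d - 1.  If a |: r and
   b |: r are distinct isolated (d-1)-faces, then none of the d-faces
   containing either of them is present, and there are at least 2 (n - 2d) of
   those; so each triple has probability at most
   (1 - p)^(2 (n - 2d)) <= n^(-2c) expR (4 c d ln n / n).  There are at most
   n^(d+1) triples, which leaves n^(d + 1 - 2c + o(1)) -> 0 as c > (d + 1) / 2. *)

From Pilot Require Import Defs.
From HB Require Import structures.
From mathcomp Require Import all_boot all_order all_algebra.
From mathcomp Require Import all_classical all_reals all_analysis.
From mathcomp Require Import zify ring lra.
Import Order.TTheory GRing.Theory Num.Theory.
Import numFieldNormedType.Exports.
Set Implicit Arguments. Unset Strict Implicit. Unset Printing Implicit Defensive.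
Local Open Scope ring_scope.

Section YprobTheory.
Variables (R : realType) (n d : nat) (p : R).
Hypotheses (p_ge0 : 0 <= p) (p_le1 : p <= 1).

Local Notation D := (dfaces n d).
Local Notation Yprob := (@Yprob R n d p).
Local Notation event := ({set {set 'I_n}} -> bool).

Let weight_ge0 (Y : {set {set 'I_n}}) : 0 <= p ^+ #|Y| * (1 - p) ^+ (#|D| - #|Y|).
Proof. by rewrite mulr_ge0 // exprn_ge0 // subr_ge0. Qed.

Lemma Yprob_ge0 (E : event) : 0 <= Yprob E.
Proof. by apply: sumr_ge0 => Y _; exact: weight_ge0. Qed.

Lemma Yprob_eq0 (E : event) : (forall Y, ~~ E Y) -> Yprob E = 0.
Proof. by move=> noE; rewrite /Yprob big_mkcondr big1 // => Y _; rewrite (negbTE (noE Y)). Qed.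

Lemma le_Yprob (E E' : event) :
  (forall Y : {set {set 'I_n}}, Y \subset D -> E Y -> E' Y) -> Yprob E <= Yprob E'.
Proof.
move=> EE'; rewrite /Yprob !big_mkcondr /=; apply: ler_sum => Y.
rewrite powersetE => YD; case EY: (E Y); first by rewrite (EE' _ YD EY).
by case: (E' Y) => //; exact: weight_ge0.
Qed.

Lemma Yprob_union_bound (I : finType) (P : pred I) (E : event) (Ei : I -> event) :
  (forall Y : {set {set 'I_n}}, Y \subset D -> E Y -> exists2 i, P i & Ei i Y) ->
  Yprob E <= \sum_(i | P i) Yprob (Ei i).
Proof.
move=> cover; rewrite /Yprob.
under [X in _ <= X]eq_bigr => i _ do rewrite big_mkcondr.
rewrite exchange_big /= big_mkcondr /=; apply: ler_sum => Y.
have sum_ge0 (Q : pred I) : 0 <= \sum_(i | Q i) (if Ei i Y then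
    p ^+ #|Y| * (1 - p) ^+ (#|D| - #|Y|) else 0).
  by apply: sumr_ge0 => i _; case: ifP => // _; exact: weight_ge0.
rewrite powersetE => YD; case EY: (E Y); last exact: sum_ge0.
have [i Pi EiY] := cover _ YD EY.
by rewrite (bigD1 i) //= EiY lerDl.
Qed.

(* Expanding \prod_u (a u + b u) gives one term per Y, namely its weight when
   Y is disjoint from F and 0 otherwise. *)
Lemma Yprob_disjoint (F : {set {set 'I_n}}) : F \subset D ->
  Yprob (fun Y => [disjoint Y & F]) = (1 - p) ^+ #|F|.
Proof.
move=> FD.
pose a u : R := if (u \in D) && (u \notin F) then p else 0.
pose b u : R := if u \in D then 1 - p else 1.
have prod_ab : \prod_u (a u + b u) = (1 - p) ^+ #|F|.
  rewrite (bigID (mem F)) /= [X in _ * X]big1 ?mulr1; last first.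
    by move=> u uF; rewrite /a /b uF andbT; case: (u \in D); rewrite ?subrKC ?add0r.
  rewrite -prodr_const; apply: eq_bigr => u uF.
  by rewrite /a /b uF (fintype.subsetP FD u uF) add0r.
rewrite -prod_ab bigA_distr /Yprob big_mkcond /=; apply: eq_bigr => J _.
rewrite powersetE; case: ifP => [/andP[JD JF] | JDF].
  rewrite (bigID (mem J)) /=; congr (_ * _).
    rewrite -prodr_const; apply: eq_bigr => u uJ.
    by rewrite /a (fintype.subsetP JD u uJ) (disjointFr JF uJ) uJ.
  rewrite (bigID (mem D)) /= [X in _ * X]big1 ?mulr1; last first.
    by move=> u /andP[/negbTE uJ /negbTE uD]; rewrite uJ /b uD.
  have -> : (#|D| - #|J|)%N = #|D :\: J| by rewrite cardsD (finset.setIidPr JD).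
  rewrite -prodr_const; symmetry; apply: eq_big => [u | u]; first by rewrite finset.in_setD.
  by move=> /andP[/negbTE uJ uD]; rewrite uJ /b uD.
have [u uJ au0] : exists2 u, u \in J & a u = 0.
  move/negbT: JDF; rewrite negb_and => /orP[/fintype.subsetPn[u uJ uD] | /pred0Pn[u /andP[uJ uF]]].
    by exists u; rewrite // /a (negbTE uD).
  by exists u; rewrite // /a (_ : u \in F) ?andbF.
by rewrite (bigD1 u) //= uJ au0 mul0r.
Qed.

End YprobTheory.

Lemma bin_leq_exp n m : ('C(n, m) <= n ^ m)%N.
Proof.
apply: leq_trans (leq_pmulr _ (fact_gt0 m)) _.
rewrite bin_ffact ffact_prod -[in X in (_ <= X)%N](card_ord m) -prod_nat_const.
by apply: leq_prod => i _; exact: leq_subr.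
Qed.

Lemma subset_card_succ_setU1 (T : finType) (r s : {set T}) :
  r \subset s -> #|s| = #|r|.+1 -> exists a, s = a |: r.
Proof.
move=> rs cs; have /cards1P[a sDr] : #|s :\: r| == 1 by rewrite cardsDS // cs subSnn.
by exists a; rewrite -(setID s r) (finset.setIidPr rs) sDr finset.setUC.
Qed.

Definition cofaces n d (s : {set 'I_n}) : {set {set 'I_n}} :=
  [set u in dfaces n d | s \subset u].

Lemma isolated_disjoint_cofaces n d (Y : {set {set 'I_n}}) (s : {set 'I_n}) :
  Defs.isolated d Y s -> [disjoint Y & cofaces d s].
Proof.
case/andP=> _ /forall_inP noface; rewrite disjoint_subset.
by apply/fintype.subsetP => u uY; rewrite !inE negb_and (noface u uY) orbT.
Qed.

(* For v outside s :|: t, v |: s is a coface of s but not of t (else t \subset s,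
   so t = s), and v |-> v |: s is injective there. *)
Lemma card_cofacesD_ge n d (s t : {set 'I_n}) : #|s| = d -> #|t| = d -> s != t ->
  (n - 2 * d <= #|cofaces d s :\: cofaces d t|)%N.
Proof.
move=> cs ct st; set X := ~: (s :|: t).
have cardX : (n - 2 * d <= #|X|)%N.
  by have := cardsC (s :|: t); have := cardsUI s t; rewrite -/X card_ord cs ct; lia.
have inj_X : {in X &, injective (fun v => v |: s)}.
  move=> v w; rewrite !inE !negb_or => /andP[vs _] /andP[ws _] /= vsws.
  have : v \in w |: s by rewrite -vsws setU11.
  by rewrite in_setU1 (negbTE vs) orbF => /eqP.
rewrite -(card_in_imset inj_X) in cardX; apply: leq_trans cardX (subset_leq_card _).
apply/fintype.subsetP => _ /imsetP[v + ->]; rewrite !inE negb_or => /andP[vs vt].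
rewrite cardsU1 vs cs add1n eqxx subsetU1 /= andbT; apply/negP => tvs.
suff ts : t \subset s by move: st; rewrite eq_sym eqEcard ts cs ct leqnn.
apply/fintype.subsetP => x xt; move: (fintype.subsetP tvs x xt).
by rewrite in_setU1 => /orP[/eqP xv | //]; move: vt; rewrite -xv xt.
Qed.

Lemma card_cofacesU_ge n d (s t : {set 'I_n}) : #|s| = d -> #|t| = d -> s != t ->
  (2 * (n - 2 * d) <= #|cofaces d s :|: cofaces d t|)%N.
Proof.
move=> cs ct st; have st_d := card_cofacesD_ge cs ct st.
rewrite eq_sym in st; have ts_d := card_cofacesD_ge ct cs st.
have := cardsU (cofaces d s) (cofaces d t); have := cardsD (cofaces d s) (cofaces d t).
have := cardsD (cofaces d t) (cofaces d s); rewrite finset.setIC.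
have := subset_leq_card (finset.subsetIl (cofaces d s) (cofaces d t)); lia.
Qed.

Definition isolated_pair_at n d (x : {set 'I_n} * 'I_n * 'I_n) (Y : {set {set 'I_n}}) :=
  let: (r, a, b) := x in
  [&& a |: r != b |: r, Defs.isolated d Y (a |: r) & Defs.isolated d Y (b |: r)].

Lemma two_adjacent_isolated_pair_at n d (Y : {set {set 'I_n}}) : (0 < d)%N ->
  two_adjacent_isolated d Y ->
  exists2 x : {set 'I_n} * 'I_n * 'I_n, #|x.1.1| == d.-1 & isolated_pair_at d x Y.
Proof.
move=> d_gt0 /existsP[s /existsP[t /existsP[r]]].
case/and5P=> st Ys Yt /eqP cr /andP[rs rt].
have card_succ u : Defs.isolated d Y u -> #|u| = #|r|.+1.
  by case/andP=> /eqP -> _; rewrite cr prednK.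
have [a sE] := subset_card_succ_setU1 rs (card_succ _ Ys).
have [b tE] := subset_card_succ_setU1 rt (card_succ _ Yt).
subst s t.
by exists (r, a, b); rewrite /= ?cr ?st ?Ys ?Yt ?eqxx.
Qed.

Lemma Yprob_isolated_pair_at_le (R : realType) n d (p : R) (x : {set 'I_n} * 'I_n * 'I_n) :
  0 <= p -> p <= 1 ->
  Yprob d p (isolated_pair_at d x) <= (1 - p) ^+ (2 * (n - 2 * d)).
Proof.
move=> p_ge0 p_le1; case: x => [[r a] b]; set s := a |: r; set t := b |: r.
have q_ge0 : 0 <= 1 - p by rewrite subr_ge0.
have [/and3P[st /eqP cs /eqP ct] | not_faces] := boolP [&& s != t, #|s| == d & #|t| == d];
  last first.
  rewrite Yprob_eq0 ?exprn_ge0 // => Y; apply: contra not_faces.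
  by case/and3P=> -> /andP[-> _] /andP[-> _].
set F := cofaces d s :|: cofaces d t.
have FD : F \subset dfaces n d by rewrite finset.subUset /cofaces !setIdE !finset.subsetIl.
apply: le_trans (le_Yprob p_ge0 p_le1 (E' := fun Y => [disjoint Y & F]) _) _.
  move=> Y _ /and3P[_ /isolated_disjoint_cofaces Ys /isolated_disjoint_cofaces Yt].
  by rewrite finset.disjoints_subset finset.setCU finset.subsetI -!finset.disjoints_subset Ys Yt.
rewrite Yprob_disjoint //; apply: ler_wiXn2l => //; first by rewrite gerBl.
exact: card_cofacesU_ge.
Qed.

Lemma Yprob_two_adjacent_isolated_le (R : realType) n d (p : R) :
  0 <= p -> p <= 1 -> (0 < d)%N ->
  Yprob d p (@two_adjacent_isolated n d) <= (n ^ d.+1)%:R * (1 - p) ^+ (2 * (n - 2 * d)).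
Proof.
move=> p_ge0 p_le1 d_gt0.
set T := [set x : {set 'I_n} * 'I_n * 'I_n | #|x.1.1| == d.-1].
apply: le_trans (Yprob_union_bound p_ge0 p_le1 (P := mem T) (Ei := isolated_pair_at d) _) _.
  by move=> Y _ /(two_adjacent_isolated_pair_at d_gt0)[x xT Yx]; exists x; rewrite ?inE.
apply: le_trans (ler_sum _ (fun x _ => Yprob_isolated_pair_at_le d x p_ge0 p_le1)) _.
rewrite sumr_const -[_ *+ #|T|]mulr_natl ler_wpM2r ?exprn_ge0 ?subr_ge0 // ler_nat.
have -> : T = finset.setX (finset.setX [set r : {set 'I_n} | #|r| == d.-1] [set: 'I_n]) [set: 'I_n].
  by apply/finset.setP => -[[r a] b]; rewrite !inE !andbT.
rewrite !cardsX card_draws !cardsT card_ord -{2}(prednK d_gt0) !expnSr.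
by rewrite !leq_mul ?bin_leq_exp.
Qed.

Local Open Scope classical_set_scope.

Section Asymptotics.
Variable R : realType.

Lemma expr1B_le_expR (x : R) k : x <= 1 -> (1 - x) ^+ k <= expR (- x * k%:R).
Proof.
move=> x_le1; rewrite expRM_natr; apply: lerXn2r; rewrite ?nnegrE ?expR_ge0 ?subr_ge0 //.
exact: expR_ge1Dx.
Qed.

(* Either ln x <= 2c, and then c ln x <= 2c^2; or 2c < ln x, and then
   c ln x <= (ln x)^2 / 2 < expR (ln x). *)
Lemma mulr_ln_le (c x : R) : 1 <= x -> 2 * c ^+ 2 <= x -> c * ln x <= x.
Proof.
move=> x_ge1 x_ge; have x_gt0 : 0 < x by apply: lt_le_trans x_ge1.
have ln_ge0 : 0 <= ln x := ln_ge0 x_ge1.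
have := expR_ge1Dxn 1 ln_ge0; rewrite lnK ?posrE // (_ : 2`!%:R = 2) // => x_exp.
have [ln_le | ln_gt] := leP (ln x) (2 * c); nra.
Qed.

Lemma cvgn_expR_Nmul_ln (e : R) : 0 < e -> expR (- (e * ln n%:R)) @[n --> \oo] --> 0.
Proof.
move=> e_gt0; apply: (@cvg_comp _ _ _ (fun n : nat => e * ln n%:R) (fun x => expR (- x))
  _ (pinfty_nbhs R)); last exact: cvgr_expR.
apply/cvgryPge => A.
near=> n; rewrite -ler_pdivrMl // -ler_expR lnK; first by near: n; exact: nbhs_infty_ger.
by rewrite posrE (lt_le_trans (expR_gt0 (A / e))) //; near: n; exact: nbhs_infty_ger.
Unshelve. all: end_near.
Qed.

End Asymptotics.

Lemma Yprob_two_adjacent_isolated_le_expR (R : realType) d (c : R) (n : nat) :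
  (0 < d)%N -> (2 * d <= n)%N -> 0 <= c * ln n%:R / n%:R <= 1 ->
  Yprob d (c * ln n%:R / n%:R) (@two_adjacent_isolated n d) <=
  expR ((d.+1%:R - 2 * c) * ln n%:R + 4 * c * d%:R * ln n%:R / n%:R).
Proof.
move=> d_gt0 d2n /andP[p_ge0 p_le1]; set L := ln n%:R; set p := c * L / n%:R.
have n_gt0 : (0 < n)%N by apply: leq_trans d2n; rewrite muln_gt0.
apply: le_trans (Yprob_two_adjacent_isolated_le n p_ge0 p_le1 d_gt0) _.
have -> : (n ^ d.+1)%:R = expR (d.+1%:R * L) :> R by rewrite expRM_natl lnK ?posrE ?ltr0n // natrX.
apply: le_trans (ler_wpM2l (expR_ge0 _) (expr1B_le_expR _ p_le1)) _.
rewrite -expRD ler_expR natrM natrB // natrM le_eqVlt; apply/orP; left; apply/eqP.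
by rewrite /p /L; field; rewrite pnatr_eq0 -lt0n.
Qed.

Lemma Yprob_two_adjacent_isolated_near (R : realType) d (c : R) :
  (0 < d)%N -> d.+1%:R / 2 < c ->
  \forall n \near \oo, 0 <= Yprob d (c * ln n%:R / n%:R) (@two_adjacent_isolated n d) <=
    expR (- ((c - d.+1%:R / 2) * ln n%:R)).
Proof.
move=> d_gt0 c_gt; set e := c - d.+1%:R / 2.
have e_gt0 : 0 < e by rewrite subr_gt0.
have c_ge0 : 0 <= c by rewrite (le_trans _ (ltW c_gt)) // divr_ge0.
near=> n.
have n_ge1 : 1 <= n%:R :> R by near: n; exact: nbhs_infty_ger.
have n_gt0 : 0 < n%:R :> R by apply: lt_le_trans n_ge1.
have L_ge0 : 0 <= ln n%:R :> R := ln_ge0 n_ge1.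
have p01 : 0 <= c * ln n%:R / n%:R <= 1.
  rewrite divr_ge0 ?mulr_ge0 ?(ltW n_gt0) //= ler_pdivrMr // mul1r mulr_ln_le //.
  by near: n; exact: nbhs_infty_ger.
have q_le_e : 4 * c * d%:R / n%:R <= e.
  rewrite ler_pdivrMr // -ler_pdivrMl // mulrC; near: n; exact: nbhs_infty_ger.
have /andP[p_ge0 p_le1] := p01; rewrite Yprob_ge0 //=.
apply: le_trans (Yprob_two_adjacent_isolated_le_expR d_gt0 _ p01) _.
  by rewrite -(ler_nat R); near: n; exact: nbhs_infty_ger.
rewrite ler_expR mulrAC; have := ler_wpM2r L_ge0 q_le_e; rewrite /e; nra.
Unshelve. all: end_near.
Qed.

Theorem lemma5 (R : realType) (d : nat) (c : R) :
  (2 <= d)%N -> (d.+1)%:R / 2 < c ->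
  (fun n : nat => @Yprob R n d (c * ln (n%:R) / n%:R) (@two_adjacent_isolated n d))
    @ \oo --> (0 : R).
Proof.
move=> d_ge2 c_gt; have e_gt0 : 0 < c - d.+1%:R / 2 by rewrite subr_gt0.
apply: (squeeze_cvgr _ (cvg_cst 0) (cvgn_expR_Nmul_ln e_gt0)).
exact: Yprob_two_adjacent_isolated_near (ltnW d_ge2) c_gt.
Qed.
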